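(* Let $\mathfrak{X}=(X,\{R_i\}_{i=0}^{d+1})$ be a commutative association scheme with $R_d^\top=R_{d+1}$ and $R_i^\top=R_i$ for $0\le i\le d-1$, whose symmetrization $\tilde{\mathfrak X}=(X,\{\tilde R_i\}_{i=0}^d)$ ($\tilde R_i=R_i$ for $i\le d-1$, $\tilde R_d=R_d\cup R_{d+1}$) is amorphic, with primitive idempotents $\tilde E_0,\dots,\tilde E_d$ numbered so that, with $k_i$ the valency of $\tilde R_i$, the adjacency matrix $\tilde A_i$ of $\tilde R_i$ satisfies $\tilde A_i\tilde E_0=k_i\tilde E_0$, $\tilde A_i\tilde E_i=b_i\tilde E_i$, and $\tilde A_i\tilde E_j=a_i\tilde E_j$ for $1\le j\le d$, $j\neq i$, with $a_i\ne b_i$ ($1\le i\le d$). Let $d\geq3$. If $1\leq i<j\leq d$, then $a_i+b_j=a_j+b_i$.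
   Context: Association scheme: finite set $X$ with a partition of $X\times X$ into relations $R_0$ (diagonal), $R_1,\dots$, closed under transposition, with constant intersection numbers; commutative if these are symmetric in the two lower indices. Adjacency matrices are the $01$-matrices of the relations; primitive idempotents $E_0=J/|X|,\dots$ form a basis of the Bose–Mesner algebra with $A_iE_j$ a scalar multiple of $E_j$. A symmetric scheme is amorphic if merging the nondiagonal relations along any partition of their index set into nonempty parts gives an association scheme. *)

From HB Require Import structures.
From mathcomp Require Import all_boot all_order all_algebra all_field.
Set Implicit Arguments. Unset Strict Implicit. Unset Printing Implicit Defensive.
Import Order.TTheory GRing.Theory Num.Theory.
Local Open Scope ring_scope.

(* A "relation structure" on the finite set X = 'I_n is a function
   r : 'I_n -> 'I_n -> nat ; the relation R_i is {(x,y) | r x y = i}. *)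

Definition adj (n : nat) (r : 'I_n -> 'I_n -> nat) (i : nat) : 'M[algC]_n :=
  \matrix_(x, y) ((r x y == i)%:R : algC).

Definition pnum (n : nat) (r : 'I_n -> 'I_n -> nat) (i j : nat) (x y : 'I_n) : nat :=
  #|[set z | (r x z == i) && (r z y == j)]|.

Definition is_scheme (n D : nat) (r : 'I_n -> 'I_n -> nat) : Prop :=
  [/\ (forall x y, (r x y < D)%N),
      (forall i, (i < D)%N -> exists x y, r x y = i),
      (forall x y, (r x y == 0%N) = (x == y)),
      (forall i, (i < D)%N -> exists j, (j < D)%N /\ forall x y, r x y = i -> r y x = j) &
      (forall i j x y x' y', r x y = r x' y' -> pnum r i j x y = pnum r i j x' y')].

Definition commutative_scheme (n : nat) (r : 'I_n -> 'I_n -> nat) : Prop :=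
  forall i j x y, pnum r i j x y = pnum r j i x y.

Definition symmetric_rel (n : nat) (r : 'I_n -> 'I_n -> nat) : Prop :=
  forall x y, r x y = r y x.

Definition merge (n : nat) (f : nat -> nat) (r : 'I_n -> 'I_n -> nat) : 'I_n -> 'I_n -> nat :=
  fun x y => if r x y == 0%N then 0%N else f (r x y).

(* amorphic symmetric scheme with relations R_0..R_d: merging along any
   partition of {1..d} into m nonempty parts (encoded by a surjection
   f : {1..d} -> {1..m}) gives an association scheme *)
Definition amorphic (n d : nat) (r : 'I_n -> 'I_n -> nat) : Prop :=
  [/\ is_scheme d.+1 r, symmetric_rel r &
      forall (m : nat) (f : nat -> nat),
        (forall i, (1 <= i <= d)%N -> (1 <= f i <= m)%N) ->
        (forall j, (1 <= j <= m)%N -> exists i, (1 <= i <= d)%N /\ f i = j) ->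
        is_scheme m.+1 (merge f r)].

Definition symmetrization (n d : nat) (r : 'I_n -> 'I_n -> nat) : 'I_n -> 'I_n -> nat :=
  fun x y => if r x y == d.+1 then d else r x y.

Definition prim_idem (n d : nat) (r : 'I_n -> 'I_n -> nat) (E : nat -> 'M[algC]_n) : Prop :=
  [/\ E 0%N = (n%:R)^-1 *: const_mx 1,
      (forall j, (j <= d)%N -> exists c : nat -> algC, E j = \sum_(i < d.+1) c i *: adj r i),
      (forall i j, (i <= d)%N -> (j <= d)%N -> E i *m E j = if i == j then E i else 0),
      (forall j, (j <= d)%N -> E j != 0) &
      \sum_(j < d.+1) E j = 1%:M].

(* The relations of the symmetrized scheme partition X x X, so their adjacency
   matrices add up to J, which annihilates every nontrivial primitive idempotent
   E_m.  Evaluating sum_l A_l E_m = 0 with the given eigenvalues yields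
   1 + sum_l a_l + (b_m - a_m) = 0, so b_m - a_m does not depend on m. *)

From HB Require Import structures.
From mathcomp Require Import all_boot all_order all_algebra all_field.
From mathcomp Require Import ring.
Set Implicit Arguments. Unset Strict Implicit. Unset Printing Implicit Defensive.
Import Order.TTheory GRing.Theory Num.Theory.
Local Open Scope ring_scope.

Section Adjacency.

Variables (n : nat) (r : 'I_n -> 'I_n -> nat).

Lemma sum_adj (D : nat) : (forall x y, (r x y < D)%N) ->
  \sum_(0 <= l < D) adj r l = const_mx 1.
Proof.
move=> r_lt; apply/matrixP => x y; rewrite summxE big_mkord !mxE.
rewrite (bigD1 (Ordinal (r_lt x y))) //= mxE eqxx big1 ?addr0 // => l.
by rewrite mxE -val_eqE /= eq_sym => /negbTE ->.
Qed.

Lemma adj0_diag : (forall x y, (r x y == 0%N) = (x == y)) -> adj r 0 = 1%:M.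
Proof. by move=> r0; apply/matrixP => x y; rewrite !mxE r0. Qed.

End Adjacency.

Lemma symmetrization_lt (n d : nat) (r : 'I_n -> 'I_n -> nat) x y :
  (r x y < d.+2)%N -> (symmetrization d r x y < d.+1)%N.
Proof. by rewrite /symmetrization ltnS leq_eqVlt; case: eqP. Qed.

Lemma symmetrization_eq0 (n d : nat) (r : 'I_n -> 'I_n -> nat) x y :
  (0 < d)%N -> (symmetrization d r x y == 0%N) = (r x y == 0%N).
Proof.
move=> d_gt0; rewrite /symmetrization.
by case: (r x y =P d.+1) => // ->; rewrite eqn0Ngt d_gt0.
Qed.

Lemma eigenvalue_sum_eq0 (n D : nat) (A : nat -> 'M[algC]_n) (E : 'M_n)
    (theta : nat -> algC) :
  E != 0 -> (forall l, (l < D)%N -> A l *m E = theta l *: E) ->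
  (\sum_(0 <= l < D) A l) *m E = 0 -> \sum_(0 <= l < D) theta l = 0.
Proof.
move=> E_neq0 eigA; rewrite mulmx_suml big_mkord.
rewrite (eq_bigr (fun l : 'I_D => theta l *: E)) => [|l _]; last exact: eigA.
rewrite -scaler_suml => /eqP; rewrite scalemx_eq0 (negbTE E_neq0) orbF.
by rewrite big_mkord => /eqP.
Qed.

Lemma prim_idem_const_mx1_mul (n d : nat) (r : 'I_n -> 'I_n -> nat)
    (E : nat -> 'M[algC]_n) (m : nat) :
  prim_idem d r E -> (0 < m <= d)%N -> (const_mx 1 : 'M_n) *m E m = 0.
Proof.
move=> [E0_def _ orthE E_neq0 _] /andP[m_gt0 m_le_d].
have n_gt0 : (0 < n)%N.
  case: posnP => // n0; case/negP: (E_neq0 m m_le_d).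
  by apply/eqP/matrixP => x; have := ltn_ord x; rewrite {2}n0.
have n_neq0 : (n%:R : algC) != 0 by rewrite pnatr_eq0 -lt0n.
have -> : const_mx 1 = n%:R *: E 0%N by rewrite E0_def scalerA mulfV ?scale1r.
by rewrite -scalemxAl orthE // eq_sym (gtn_eqF m_gt0) scaler0.
Qed.

Section SymmetrizedEigenvalues.

Variables (n d : nat) (r : 'I_n -> 'I_n -> nat) (E : nat -> 'M[algC]_n).
Variables (a b : nat -> algC).
Let s := symmetrization d r.

Hypothesis r_lt : forall x y, (r x y < d.+2)%N.
Hypothesis r_eq0 : forall x y, (r x y == 0%N) = (x == y).
Hypothesis E_prim : prim_idem d s E.
Hypothesis eig_b : forall l, (1 <= l <= d)%N -> adj s l *m E l = b l *: E l.
Hypothesis eig_a : forall l m, (1 <= l <= d)%N -> (1 <= m <= d)%N -> m != l ->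
  adj s l *m E m = a l *: E m.

Lemma eigenvalue_gap (m : nat) : (1 <= m <= d)%N ->
  b m - a m = - (1 + \sum_(1 <= l < d.+1) a l).
Proof.
move=> /[dup] m_range /andP[m_gt0 m_le_d].
have d_gt0 : (0 < d)%N := leq_trans m_gt0 m_le_d.
pose theta l := if l == 0%N then 1 else if l == m then b m else a l.
have : \sum_(0 <= l < d.+1) theta l = 0.
  apply: (eigenvalue_sum_eq0 (A := adj s) (E := E m)).
  - by have [_ _ _ E_neq0 _] := E_prim; exact: E_neq0.
  - move=> l; rewrite ltnS /theta; case: eqP => [->|/eqP l_neq0] l_le_d.
      by rewrite adj0_diag ?mul1mx ?scale1r // => x y; rewrite symmetrization_eq0.
    have l_range : (1 <= l <= d)%N by rewrite lt0n l_neq0.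
    case: eqP => [->|/eqP l_neq_m]; first exact: eig_b.
    by apply: eig_a; rewrite // eq_sym.
  rewrite sum_adj; last by move=> x y; exact: symmetrization_lt.
  exact: prim_idem_const_mx1_mul E_prim m_range.
have m_in : m \in index_iota 1 d.+1 by rewrite mem_index_iota ltnS.
have theta_off : \sum_(1 <= l < d.+1 | l != m) theta l =
                 \sum_(1 <= l < d.+1 | l != m) a l.
  rewrite big_nat_cond [RHS]big_nat_cond.
  apply: eq_bigr => l /andP[/andP[l_gt0 _] /negbTE l_neq_m].
  by rewrite /theta l_neq_m (negbTE (lt0n_neq0 l_gt0)).
rewrite big_ltn // (bigD1_seq m) ?iota_uniq //= theta_off.
rewrite (bigD1_seq m m_in) ?iota_uniq //=.
rewrite /theta eqxx (negbTE (lt0n_neq0 m_gt0)) eqxx => sum_eq0.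
by apply/eqP; rewrite -subr_eq0 -[X in _ == X]sum_eq0; apply/eqP; ring.
Qed.

End SymmetrizedEigenvalues.

Theorem lemma3p2 (n d : nat) (r : 'I_n -> 'I_n -> nat) (E : nat -> 'M[algC]_n)
    (k : nat -> nat) (a b : nat -> algC) (i j : nat) :
  is_scheme d.+2 r ->
  commutative_scheme r ->
  (forall x y, r x y = d -> r y x = d.+1) ->
  (forall l x y, (l < d)%N -> r x y = l -> r y x = l) ->
  amorphic d (symmetrization d r) ->
  prim_idem d (symmetrization d r) E ->
  (forall l x, (l <= d)%N -> #|[set y | symmetrization d r x y == l]| = k l) ->
  (forall l, (l <= d)%N -> adj (symmetrization d r) l *m E 0%N = (k l)%:R *: E 0%N) ->
  (forall l, (1 <= l <= d)%N -> adj (symmetrization d r) l *m E l = b l *: E l) ->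
  (forall l m, (1 <= l <= d)%N -> (1 <= m <= d)%N -> m != l ->
     adj (symmetrization d r) l *m E m = a l *: E m) ->
  (forall l, (1 <= l <= d)%N -> a l != b l) ->
  (3 <= d)%N ->
  (1 <= i)%N -> (i < j)%N -> (j <= d)%N ->
  a i + b j = a j + b i.
Proof.
move=> [r_lt _ r_eq0 _ _] _ _ _ _ E_prim _ _ eig_b eig_a _ _ i_gt0 lt_ij j_le_d.
have gap := eigenvalue_gap r_lt r_eq0 E_prim eig_b eig_a.
have i_range : (1 <= i <= d)%N by rewrite i_gt0 (leq_trans (ltnW lt_ij)).
have j_range : (1 <= j <= d)%N by rewrite j_le_d (leq_trans i_gt0 (ltnW lt_ij)).
have gap_ij : b j - a j = b i - a i by rewrite (gap i i_range) (gap j j_range).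
by rewrite -[b j](subrK (a j)) gap_ij; ring.
Qed.
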